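(* Let $G=(V,E)$ be an undirected graph with $n$ vertices and non-negative edge weights of maximum value $W$, let $K$ be a positive integer, and let $\varepsilon>0$. Let $s,t \in V$ be vertices with finite distance $d(s,t)$, set $r = \frac{\varepsilon}{2} d(s,t) + W$, and let $P$ be a shortest $s$-$t$ path in $G$. (i) If all vertices of $P$ lie in $V_r$, then the hop-distance from $s$ to $t$ in $H$ is at most $\lceil 2/\varepsilon\rceil$. (ii) If all vertices of $P$ lie in $V_r$, then $V(P)\cap A_{1/\varepsilon}(s)\cap A_{1/\varepsilon}(t) \neq \emptyset$. (iii) If $P$ contains a vertex of $V\setminus V_r$, then $(V(P)\setminus V_r)\cap A_{1/\varepsilon}(s)$ or $(V(P)\setminus V_r)\cap A_{1/\varepsilon}(t)$ is non-empty.
   Context: $d(u,v)$ is the weighted distance in $G$. For $v\in V$, $K[v]$ is a set of the $K$ vertices closest to $v$ in $G$ (including $v$, ties broken arbitrarily; the whole connected component of $v$ if it has fewer than $K$ vertices). $\mathrm{ball}(v,r)=\{u\in V: d(v,u)\le r\}$ and $V_r=\{v\in V:\mathrm{ball}(v,r)\subseteq K[v]\}$. $H$ is the auxiliary graph on vertex set $V$ with, for each $v\in V$, an edge (hop) from $v$ to every $v'\in K[v]\setminus\{v\}$, of weight $d(v,v')$; a hop may be taken from $v$ to $v'$ only when $v'\in K[v]$. The hop-distance from $x$ to $y$ in $H$ is the minimum number of hops on a walk in $H$ from $x$ to $y$. For a vertex $x$, $A_{1/\varepsilon}(x)$ is the set of vertices reachable from $x$ in $H$ by at most $\lceil 1/\varepsilon\rceil$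 hops. *)

From HB Require Import structures.
From mathcomp Require Import all_boot all_order all_algebra.
From mathcomp Require Import boolp classical_sets reals constructive_ereal ereal.
Set Implicit Arguments. Unset Strict Implicit. Unset Printing Implicit Defensive.
Import Order.TTheory GRing.Theory Num.Theory.
Local Open Scope ring_scope.
Local Open Scope classical_set_scope.

Section Defs.
Variables (R : realType) (T : finType).
(* the graph: vertex set T, symmetric edge relation e, weights w on edges *)
Variables (e : rel T) (w : T -> T -> R).

Definition walk_w (x : T) (p : seq T) : R :=
  \sum_(ij <- zip (x :: p) p) w ij.1 ij.2.

Definition gwalk (u v : T) (p : seq T) : bool := path e u p && (last u p == v).

Definition dist (u v : T) : \bar R :=
  ereal_inf [set (walk_w u p)%:E | p in [set p | gwalk u v p]].

(* maximum edge weight W (0 if there are no edges) *)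
Definition maxw : R := \big[Num.max/0]_(x : T) \big[Num.max/0]_(y : T | e x y) w x y.

Definition shortest_path (u v : T) (p : seq T) : Prop :=
  [/\ gwalk u v p, uniq (u :: p) & (walk_w u p)%:E = dist u v].

Definition comp (v : T) : {set T} := [set u | (dist v u < +oo)%E].

(* Kset v is a valid choice of K[v]: the K vertices closest to v (including v),
   ties broken arbitrarily, or the whole component if it has fewer than K
   vertices *)
Definition is_Knearest (K : nat) (Kset : T -> {set T}) : Prop :=
  forall v, [/\ v \in Kset v, Kset v \subset comp v,
     #|Kset v| = minn K #|comp v| &
     forall u x, u \in Kset v -> x \notin Kset v -> (dist v u <= dist v x)%E].

Definition ball (v : T) (r : R) : {set T} := [set u | (dist v u <= r%:E)%E].

Definition Vr (Kset : T -> {set T}) (r : R) : {set T} :=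
  [set v | ball v r \subset Kset v].

Definition hop (Kset : T -> {set T}) : rel T := fun v v' => (v' \in Kset v) && (v' != v).

(* y is reachable from x in H with at most m hops,
   i.e. the hop-distance from x to y is at most m *)
Definition hop_reach (Kset : T -> {set T}) (m : nat) (x y : T) : bool :=
  [exists p : m.+1.-tuple T, exists k : 'I_m.+1,
      path (hop Kset) x (take k p) && (last x (take k p) == y)].

Definition ceiln (x : R) : nat := `|Num.ceil x|%N.

Definition Aset (Kset : T -> {set T}) (eps : R) (x : T) : {set T} :=
  [set y | hop_reach Kset (ceiln eps^-1) x y].
End Defs.

From HB Require Import structures.
From mathcomp Require Import all_boot all_order all_algebra.
From mathcomp Require Import boolp classical_sets reals constructive_ereal ereal.
From mathcomp Require Import ring lra zify.
Set Implicit Arguments. Unset Strict Implicit. Unset Printing Implicit Defensive.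
Import Order.TTheory GRing.Theory Num.Theory.
Local Open Scope ring_scope.

(* Walk along the shortest path P greedily.  From a vertex of V_r, every later
   vertex of P at path distance at most r lies in its ball, hence in its
   K-nearest set, so one hop reaches the farthest such vertex; the edge leaving
   that vertex weighs at most W = r - eps d(s,t)/2, so each hop advances more
   than eps d(s,t)/2 along P.  Thus ceil(2/eps) hops cover P, and ceil(1/eps)
   hops from s and from t each cover more than half of P, so the two covered
   stretches meet.  If P leaves V_r, hop from each end only until the first
   vertex outside V_r seen from that end: if neither walk reached its bad
   vertex, the two covered stretches would still meet, which is impossible
   since both stay short of the stretch between the two bad vertices. *)

Section HopReach.
Variables (T : finType) (Kset : T -> {set T}).

Definition reach (m : nat) (x y : T) : Prop :=
  exists l, [/\ (size l <= m)%N, path (hop Kset) x l & last x l = y].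

Lemma reach_refl x : reach 0 x x.
Proof. by exists [::]. Qed.

Lemma reachS m x y : reach m x y -> reach m.+1 x y.
Proof. by case=> l [? ? ?]; exists l; split => //; apply: leqW. Qed.

Lemma reach_rcons m x y z : reach m x y -> z \in Kset y -> reach m.+1 x z.
Proof.
case=> l [sz_l path_l last_l] zKy.
have [->|zy] := eqVneq z y; first by apply: reachS; exists l.
exists (rcons l z); split; first by rewrite size_rcons.
  by rewrite rcons_path path_l last_l /hop zKy zy.
by rewrite last_rcons.
Qed.

Lemma reach_hop_reach m x y : reach m x y -> hop_reach Kset m x y.
Proof.
case=> l [sz_l path_l last_l].
have sz_pad : size (l ++ nseq (m.+1 - size l) x) == m.+1.
  by rewrite size_cat size_nseq subnKC // leqW.
apply/existsP; exists (Tuple sz_pad); apply/existsP.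
exists (Ordinal (sz_l : (size l < m.+1)%N)).
by rewrite /= take_size_cat // path_l last_l eqxx.
Qed.

End HopReach.

Section GreedyHopping.
Variables (R : realType) (T : finType) (Kset : T -> {set T}).
Variables (v : nat -> T) (pre : nat -> R) (N B : nat) (r c : R).
Hypothesis r_ge0 : 0 <= r.
Hypothesis pre_mono : forall i j, (i <= j <= N)%N -> pre i <= pre j.
Hypothesis pre_step : forall k, (k < N)%N -> pre k.+1 - pre k <= r - c.
Hypothesis hop_v : forall i j, (i <= j <= N)%N -> (i < B)%N ->
  pre j - pre i <= r -> v j \in Kset (v i).

(* The farthest [a'] with [pre a' - pre a <= r] is one hop away, and if
   [a' < N] the next edge brings the path length beyond [r] while weighing at
   most [r - c]. *)
Lemma greedy_hop m a : (a <= N)%N ->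
    (forall j, (j <= a)%N -> reach Kset m (v 0) (v j)) ->
  exists2 a', (a <= a' <= N)%N &
    (forall j, (j <= a')%N -> reach Kset m.+1 (v 0) (v j)) /\
    ((minn B N <= a')%N \/ pre a + c < pre a').
Proof.
move=> aN reach_a.
have [stop|] := leqP (minn B N) a.
  exists a; first by rewrite leqnn aN.
  by split; [move=> j /reach_a/reachS | left].
rewrite leq_min => /andP[aB aN'].
pose P j := (j <= N)%N && (pre j - pre a <= r).
have Pa : P a by rewrite /P aN subrr r_ge0.
have ubP : forall j, P j -> (j <= N)%N by move=> j /andP[].
case: (ex_maxnP (ex_intro P a Pa) ubP) => a' /andP[a'N a'r] a'max.
have aa' : (a <= a')%N by apply: a'max.
exists a'; first by rewrite aa' a'N.
split=> [j ja'|].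
  have [ja|aj] := leqP j a; first exact/reachS/reach_a.
  have ajN : (a <= j <= N)%N by rewrite (ltnW aj) (leq_trans ja' a'N).
  have ja'N : (j <= a' <= N)%N by rewrite ja' a'N.
  apply: reach_rcons (reach_a a (leqnn a)) _; apply: hop_v => //.
  by have := pre_mono ja'N; lra.
have [->|a'N'] := eqVneq a' N; first by left; apply: geq_minr.
right; have a'ltN : (a' < N)%N by rewrite ltn_neqAle a'N' a'N.
have : ~~ P a'.+1 by apply/negP => /a'max; rewrite ltnn.
rewrite /P a'ltN /= -ltNge => far.
by have := pre_step a'ltN; lra.
Qed.

Lemma greedy_reach m : exists2 a, (a <= N)%N &
  (forall j, (j <= a)%N -> reach Kset m.+1 (v 0) (v j)) /\
  ((minn B N <= a)%N \/ c *+ m.+1 < pre a - pre 0).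
Proof.
elim: m => [|m [a aN [reach_a far_a]]].
  have reach0 j : (j <= 0)%N -> reach Kset 0 (v 0) (v j).
    by rewrite leqn0 => /eqP ->; apply: reach_refl.
  have [a /andP[_ aN] [reach_a far_a]] := greedy_hop (leq0n N) reach0.
  by exists a => //; split => //; case: far_a => [|?]; [left | right; lra].
have [a' /andP[aa' a'N] [reach_a' far_a']] := greedy_hop aN reach_a.
exists a' => //; split => //.
case: far_a => [stop|far_a]; first by left; apply: leq_trans stop aa'.
by case: far_a' => [|far_a']; [left | right; rewrite mulrS; lra].
Qed.

End GreedyHopping.

Section WalkDistance.
Variables (R : realType) (T : finType) (e : rel T) (w : T -> T -> R).

Lemma dist_le_cons a b c y : e a b -> (dist e w b c <= y%:E)%E ->
  (dist e w a c <= (w a b + y)%:E)%E.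
Proof.
move=> eab dbc.
have : (dist e w a c - (w a b)%:E <= dist e w b c)%E.
  apply/ereal_infP => _ [q walk_q <-].
  rewrite leeBlDl // -EFinD; apply: ge_ereal_inf.
  exists (walk_w w a (b :: q))%:E; last by rewrite /walk_w /= big_cons.
  by exists (b :: q) => //; move: walk_q; rewrite /gwalk /= eab.
rewrite leeBlDl // => /le_trans; apply.
by rewrite EFinD leeD2l.
Qed.

Lemma dist_self_le0 a : (dist e w a a <= 0%:E)%E.
Proof.
apply: ge_ereal_inf; exists (walk_w w a [::])%:E.
  by exists [::] => //; rewrite /gwalk /= eqxx.
by rewrite /walk_w /= big_nil.
Qed.

Lemma walk_w_nth x0 x l : walk_w w x l =
  \sum_(k < size l) w (nth x0 (x :: l) k) (nth x0 (x :: l) k.+1).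
Proof.
elim: l x => [|y l IH] x; first by rewrite /walk_w big_nil big_ord0.
by rewrite /walk_w /= big_cons big_ord_recl -IH.
Qed.

Lemma maxw_ge x y : e x y -> w x y <= maxw e w.
Proof. by move=> exy; apply: le_trans (le_bigmax _ _ x); apply: le_bigmax_cond. Qed.

Lemma maxw_ge0 : 0 <= maxw e w.
Proof. exact: bigmax_ge_id. Qed.

Lemma mem_Kset_Vr Kset r x y : x \in Vr e w Kset r ->
  (dist e w x y <= r%:E)%E -> y \in Kset x.
Proof. by rewrite inE => /fintype.subsetP xr dxy; apply: xr; rewrite inE. Qed.

End WalkDistance.

Lemma ceiln_ge (R : realType) (x : R) : x <= (ceiln x)%:R.
Proof.
have [x_le0|x_gt0] := lerP x 0; first exact: le_trans x_le0 _.
rewrite /ceiln natr_absz ger0_norm; first exact: ceil_ge.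
by rewrite ceil_ge0; lra.
Qed.

Lemma ceiln_gt0 (R : realType) (x : R) : 0 < x -> (0 < ceiln x)%N.
Proof.
move=> x_gt0; rewrite lt0n; apply: contraTneq (ceiln_ge x) => ->.
by rewrite -ltNge.
Qed.

Lemma ceiln_div_ge (R : realType) (x y : R) : 0 < y -> x <= y * (ceiln (x / y))%:R.
Proof.
move=> y_gt0; have := ler_wpM2l (ltW y_gt0) (ceiln_ge (x / y)).
by rewrite mulrCA divff ?mulr1 ?gt_eqF.
Qed.

Section ShortestPathHops.
Variables (R : realType) (T : finType) (e : rel T) (w : T -> T -> R).
Hypothesis e_sym : symmetric e.
Hypothesis w_sym : forall x y, w x y = w y x.
Hypothesis w_ge0 : forall x y, e x y -> 0 <= w x y.
Variables (Kset : T -> {set T}) (eps : R) (s t : T) (p : seq T).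
Hypothesis eps_gt0 : 0 < eps.
Hypothesis sp : shortest_path e w s t p.

Let N := size p.
Let v k := nth s (s :: p) k.
Let pre j := \sum_(k < j) w (v k) (v k.+1).
Let c := eps / 2 * pre N.
Let r := eps / 2 * fine (dist e w s t) + maxw e w.

Lemma edge_v k : (k < N)%N -> e (v k) (v k.+1).
Proof. by case: sp => /andP[/(pathP s) + _] _ _; apply. Qed.

Lemma preS k : pre k.+1 = pre k + w (v k) (v k.+1).
Proof. by rewrite /pre big_ord_recr. Qed.

Lemma pre_mono i j : (i <= j <= N)%N -> pre i <= pre j.
Proof.
case/andP=> + jN; elim: j jN => [|j IH] jN; first by rewrite leqn0 => /eqP ->.
rewrite leq_eqVlt => /orP[/eqP -> //|ij].
by rewrite preS; have := w_ge0 (edge_v jN); have := IH (ltnW jN) ij; lra.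
Qed.

Lemma dist_v_le i n : (i + n <= N)%N ->
  (dist e w (v i) (v (i + n)) <= (pre (i + n) - pre i)%:E)%E.
Proof.
elim: n i => [|n IH] i; first by rewrite addn0 subrr => _; apply: dist_self_le0.
rewrite addnS -addSn => inN; have iN : (i < N)%N by lia.
apply: le_trans (dist_le_cons (edge_v iN) (IH _ inN)) _.
by rewrite preS lee_fin; lra.
Qed.

Lemma dist_v_le_rev i n : (i + n <= N)%N ->
  (dist e w (v (i + n)) (v i) <= (pre (i + n) - pre i)%:E)%E.
Proof.
elim: n => [|n IH]; first by rewrite addn0 subrr => _; apply: dist_self_le0.
rewrite addnS => inN.
have e_back : e (v (i + n).+1) (v (i + n)) by rewrite e_sym edge_v.
apply: le_trans (dist_le_cons e_back (IH (ltnW inN))) _.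
by rewrite preS w_sym lee_fin; lra.
Qed.

Lemma v_last : v N = t.
Proof.
by case: sp => /andP[_ /eqP <-] _ _; rewrite /v -[N]/((size (s :: p)).-1) nth_last.
Qed.

Lemma pre_last : pre N = fine (dist e w s t).
Proof. by case: sp => _ _ <-; rewrite (walk_w_nth w s). Qed.

Lemma pre0 : pre 0 = 0.
Proof. exact: big_ord0. Qed.

Lemma preN_ge0 : 0 <= pre N.
Proof. by rewrite -pre0 pre_mono ?leqnn. Qed.

Lemma c_ge0 : 0 <= c.
Proof. by rewrite /c mulr_ge0 ?divr_ge0 ?(ltW eps_gt0) ?preN_ge0. Qed.

Lemma r_eq : r = c + maxw e w.
Proof. by rewrite /r /c pre_last. Qed.

Lemma pre_step k : (k < N)%N -> pre k.+1 - pre k <= r - c.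
Proof. by move=> kN; rewrite r_eq preS; have := maxw_ge w (edge_v kN); lra. Qed.

Lemma r_ge0 : 0 <= r.
Proof. by rewrite r_eq; have := maxw_ge0 e w; have := c_ge0; lra. Qed.

Lemma reach_from_s B m :
    (forall i, (i < B)%N -> (i <= N)%N -> v i \in Vr e w Kset r) ->
  exists2 a, (a <= N)%N &
    (forall j, (j <= a)%N -> reach Kset m.+1 s (v j)) /\
    ((minn B N <= a)%N \/ c *+ m.+1 < pre a).
Proof.
move=> good.
have hop_v i j : (i <= j <= N)%N -> (i < B)%N -> pre j - pre i <= r ->
    v j \in Kset (v i).
  case/andP=> ij jN iB dij; apply: mem_Kset_Vr (good _ iB (leq_trans ij jN)) _.
  rewrite -(subnKC ij) in jN dij *.
  by apply: le_trans (dist_v_le jN) _; rewrite lee_fin.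
have [a aN [reach_a far_a]] := greedy_reach r_ge0 pre_mono pre_step hop_v m.
by exists a => //; rewrite pre0 subr0 in far_a.
Qed.

Lemma reach_from_t B m :
    (forall i, (i < B)%N -> (i <= N)%N -> v (N - i) \in Vr e w Kset r) ->
  exists2 a, (a <= N)%N &
    (forall j, (j <= a)%N -> reach Kset m.+1 t (v (N - j))) /\
    ((minn B N <= a)%N \/ c *+ m.+1 < pre N - pre (N - a)).
Proof.
move=> good; pose v' k := v (N - k); pose pre' j := pre N - pre (N - j).
have mono' i j : (i <= j <= N)%N -> pre' i <= pre' j.
  move=> ijN; have : (N - j <= N - i <= N)%N by lia.
  by move/pre_mono; rewrite /pre'; lra.
have step' k : (k < N)%N -> pre' k.+1 - pre' k <= r - c.
  move=> kN; have lt : (N - k.+1 < N)%N by lia.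
  by have := pre_step lt; rewrite subnSK // /pre'; lra.
have hop' i j : (i <= j <= N)%N -> (i < B)%N -> pre' j - pre' i <= r ->
    v' j \in Kset (v' i).
  case/andP=> ij jN iB dij; apply: mem_Kset_Vr (good _ iB (leq_trans ij jN)) _.
  have ji : (N - j + (j - i) = N - i)%N by lia.
  have jiN : (N - j + (j - i) <= N)%N by lia.
  rewrite /v' -ji; apply: le_trans (dist_v_le_rev jiN) _.
  by rewrite ji lee_fin; move: dij; rewrite /pre'; lra.
have [a aN [reach_a far_a]] := greedy_reach r_ge0 mono' step' hop' m.
exists a => //; split; first by move=> j /reach_a; rewrite /v' subn0 v_last.
by move: far_a; rewrite /pre' subn0 subrr subr0.
Qed.

Lemma preN_le_ceil_2_eps : pre N <= c *+ ceiln (2 / eps).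
Proof.
rewrite /c -mulr_natr; have := ler_wpM2r preN_ge0 (ceiln_div_ge 2 eps_gt0).
set n := (ceiln _)%:R; have -> : eps / 2 * pre N * n = eps * n * pre N / 2 by ring.
lra.
Qed.

Lemma preN_le_2_ceil_inv_eps : pre N <= 2 * (c *+ ceiln eps^-1).
Proof.
rewrite /c -[_ *+ ceiln _]mulr_natr.
have := ler_wpM2r preN_ge0 (ceiln_div_ge 1 eps_gt0).
rewrite div1r; set n := (ceiln _)%:R.
have -> : eps / 2 * pre N * n = eps * n * pre N / 2 by ring.
lra.
Qed.

Lemma reach_both_ends B1 B2 :
    (forall i, (i < B1)%N -> (i <= N)%N -> v i \in Vr e w Kset r) ->
    (forall i, (i < B2)%N -> (i <= N)%N -> v (N - i) \in Vr e w Kset r) ->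
  exists a1 a2,
    [/\ forall j, (j <= a1)%N -> reach Kset (ceiln eps^-1) s (v j),
        forall j, (j <= a2)%N -> reach Kset (ceiln eps^-1) t (v (N - j)) &
        [\/ (minn B1 N <= a1)%N, (minn B2 N <= a2)%N | (N - a2 <= a1)%N]].
Proof.
move=> good1 good2.
have m_gt0 : (0 < ceiln eps^-1)%N by rewrite ceiln_gt0 ?invr_gt0.
have [a1 a1N [reach1 far1]] := reach_from_s (ceiln eps^-1).-1 good1.
have [a2 a2N [reach2 far2]] := reach_from_t (ceiln eps^-1).-1 good2.
rewrite prednK // in reach1 far1 reach2 far2.
exists a1, a2; split => //.
case: far1 => [|far1]; first by constructor 1.
case: far2 => [|far2]; first by constructor 2.
constructor 3; rewrite leqNgt; apply/negP => a1_lt.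
have : (a1 <= N - a2 <= N)%N by lia.
by move/pre_mono; have := preN_le_2_ceil_inv_eps; lra.
Qed.

Lemma mem_Vr_v : (forall x, x \in s :: p -> x \in Vr e w Kset r) ->
  forall i, (i <= N)%N -> v i \in Vr e w Kset r.
Proof. by move=> good i iN; apply/good/mem_nth; rewrite ltnS. Qed.

Lemma hop_reach_all_good : (forall x, x \in s :: p -> x \in Vr e w Kset r) ->
  hop_reach Kset (ceiln (2 / eps)) s t.
Proof.
move/mem_Vr_v=> good.
have m_gt0 : (0 < ceiln (2 / eps))%N by rewrite ceiln_gt0 ?divr_gt0.
have [a aN [reach_a far_a]] :=
  reach_from_s (B := N.+1) (ceiln (2 / eps)).-1 (fun i _ => good i).
rewrite prednK // in reach_a far_a.
suff aN' : a = N by rewrite -v_last; apply/reach_hop_reach/reach_a; rewrite aN'.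
case: far_a => [|far_a]; first by clear -aN; lia.
exfalso; have : (a <= N <= N)%N by rewrite aN leqnn.
by move/pre_mono; have := preN_le_ceil_2_eps; lra.
Qed.

Lemma meet_all_good : (forall x, x \in s :: p -> x \in Vr e w Kset r) ->
  exists2 x, x \in s :: p & (x \in Aset Kset eps s) && (x \in Aset Kset eps t).
Proof.
move/mem_Vr_v=> good.
have [a1 [a2 [reach1 reach2 meet]]] :=
  reach_both_ends (B1 := N.+1) (B2 := N.+1) (fun i _ => good i)
    (fun i _ _ => good _ (leq_subr i N)).
have a2a1 : (N - a2 <= a1)%N by case: meet; lia.
exists (v (N - a2)); first by rewrite mem_nth // ltnS leq_subr.
rewrite !inE; apply/andP; split; apply: reach_hop_reach.
  exact: reach1 a2a1.
exact: reach2 (leqnn a2).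
Qed.

Lemma reach_bad_vertex : (exists2 x, x \in s :: p & x \notin Vr e w Kset r) ->
  exists2 x, (x \in s :: p) && (x \notin Vr e w Kset r) &
    (x \in Aset Kset eps s) || (x \in Aset Kset eps t).
Proof.
case=> x xP xbad; pose i := index x (s :: p).
have iN : (i <= N)%N by rewrite -ltnS [X in (_ < X)%N]/= index_mem.
have vi : v i = x by rewrite /v nth_index.
pose bad1 j := (j <= N)%N && (v j \notin Vr e w Kset r).
pose bad2 j := (j <= N)%N && (v (N - j) \notin Vr e w Kset r).
have ex1 : exists j, bad1 j by exists i; rewrite /bad1 iN vi.
have ex2 : exists j, bad2 j by exists (N - i)%N; rewrite /bad2 leq_subr subKn // vi.
case: (ex_minnP ex1) => B1 /andP[B1N B1bad] B1min.
case: (ex_minnP ex2) => B2 /andP[B2N B2bad] B2min.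
have good1 j : (j < B1)%N -> (j <= N)%N -> v j \in Vr e w Kset r.
  by move=> jB jN; apply: contraTT jB => jbad; rewrite -leqNgt B1min // /bad1 jN.
have good2 j : (j < B2)%N -> (j <= N)%N -> v (N - j) \in Vr e w Kset r.
  by move=> jB jN; apply: contraTT jB => jbad; rewrite -leqNgt B2min // /bad2 jN.
have B12 : (B1 <= N - B2)%N by apply: B1min; rewrite /bad1 leq_subr.
have [a1 [a2 [reach1 reach2 meet]]] := reach_both_ends good1 good2.
have [B1a1|B2a2] : (B1 <= a1)%N \/ (B2 <= a2)%N by case: meet; lia.
  exists (v B1); first by rewrite mem_nth ?ltnS.
  by rewrite !inE; apply/orP; left; apply/reach_hop_reach/reach1.
exists (v (N - B2)); first by rewrite mem_nth ?ltnS ?leq_subr.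
by rewrite !inE; apply/orP; right; apply/reach_hop_reach/reach2.
Qed.

End ShortestPathHops.

Theorem lemma8 (R : realType) (T : finType) (e : rel T) (w : T -> T -> R)
  (e_sym : symmetric e) (w_sym : forall x y, w x y = w y x)
  (w_ge0 : forall x y, e x y -> 0 <= w x y)
  (K : nat) (K_gt0 : (0 < K)%N) (Kset : T -> {set T})
  (HK : is_Knearest e w K Kset)
  (eps : R) (eps_gt0 : 0 < eps) (s t : T)
  (st_fin : (dist e w s t < +oo)%E)
  (p : seq T) (HP : shortest_path e w s t p) :
  let r := eps / 2 * fine (dist e w s t) + maxw e w in
  ((forall x, x \in s :: p -> x \in Vr e w Kset r) ->
     hop_reach Kset (ceiln (2 / eps)) s t /\
     exists2 x, x \in s :: p &
       (x \in Aset Kset eps s) && (x \in Aset Kset eps t)) /\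
  ((exists2 x, x \in s :: p & x \notin Vr e w Kset r) ->
     exists2 x, (x \in s :: p) && (x \notin Vr e w Kset r) &
       (x \in Aset Kset eps s) || (x \in Aset Kset eps t)).
Proof.
move=> r; split=> [good|].
  split; first exact (hop_reach_all_good w_ge0 eps_gt0 HP good).
  exact (meet_all_good e_sym w_sym w_ge0 eps_gt0 HP good).
exact (reach_bad_vertex e_sym w_sym w_ge0 eps_gt0 HP).
Qed.
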